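(* Let $\mathcal{C}$ be a braided closed monoidal category with pushouts preserved by all functors $-\otimes Y$, $Y\otimes-$, in which all epimorphisms are regular, and let $H$ be a Hopf algebra in $\mathcal{C}$. If $(A,A\bullet H,\pi_A,\rho_A)$ is an algebra in the monoidal category with oplax unit $\mathsf{qPMod}^H$, then $A$ and $A\bullet H$ are algebras in $\mathcal{C}$, and $\pi_A:A\otimes H\to A\bullet H$ and $\rho_A:A\to A\bullet H$ are algebra morphisms.
   Context: Monoidal unit $k$, braiding $\sigma$, right unit iso $r_X:X\to X\otimes k$; $H$ has multiplication $\mu_H$, unit $\eta_H$, comultiplication $\Delta$, counit $\epsilon$; $A\otimes H$ carries the tensor product algebra structure via the braiding. A partial comodule datum is $(X,X\bullet H,\pi_X,\rho_X)$ with $\pi_X:X\otimes H\to X\bullet H$ an epimorphism and $\rho_X:X\to X\bullet H$. Associated pushouts: $X\bullet k$ (of $\pi_X$ and $X\otimes\epsilon$, legs $X\bullet\epsilon$, $\pi_{X,\epsilon}$); $(X\bullet H)\bullet H$ (of $\pi_X$ and $\rho_X\otimes H$, legs $\rho_X\bullet H$, $\pi_{X\bullet H}$); $X\bullet(H\otimes H)$ (of $\pi_X$ and $X\otimes\Delta$, legs $X\bullet\Delta$, $\pi_{X,\Delta}$); $X\bullet(H\bullet H)$ (of $\pi_{X,\Delta}$ and $\pi_X\otimes H$, legs $\pi'_X$, $\pi'_{X,\Delta}$); $\Theta$ (of $\pi_{X\bullet H}$ and $\pi'_{X,\Delta}$, legs $\theta_1,\theta_2$). Quasi partial comodule: $\pi_{X,\epsilon}$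 iso with $(X\bullet\epsilon)\rho_X=\pi_{X,\epsilon}r_X$, and $\theta_1(\rho_X\bullet H)\rho_X=\theta_2\pi'_X(X\bullet\Delta)\rho_X$. Morphisms: pairs $(f,f\bullet H)$ with $(f\bullet H)\rho_X=\rho_Yf$, $(f\bullet H)\pi_X=\pi_Y(f\otimes H)$. $\mathsf{qPMod}^H$ is monoidal with oplax unit: the tensor of $X,Y$ is $(X\otimes Y,(X\otimes Y)\bullet H,\pi_{X\otimes Y},\overline\mu(\rho_X\otimes\rho_Y))$ where $(X\otimes Y)\bullet H$ with legs $\pi_{X\otimes Y}$ and $\overline\mu$ is the pushout of $\pi_X\otimes\pi_Y$ and $\mu_{X,Y}=(X\otimes Y\otimes\mu_H)(X\otimes\sigma_{H,Y}\otimes H)$; the oplax unit is $I=(k,H,\mathrm{id}_H,\eta_H)$ with oplax unit maps $r:X\to X\otimes I$, $l:X\to I\otimes X$. An algebra in it is an object $A$ with morphisms $m:A\otimes A\to A$, $u:I\to A$ of partial comodules such that $m(m\otimes A)=m(A\otimes m)$ (via the associator) and $m(A\otimes u)r_A=\mathrm{id}_A=m(u\otimes A)l_A$. *)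

Set Implicit Arguments.
Unset Strict Implicit.

Class Category (Ob : Type) := {
  hom : Ob -> Ob -> Type;
  idm : forall A, hom A A;
  comp : forall {A B D}, hom B D -> hom A B -> hom A D;
  comp_id_l : forall A B (f : hom A B), comp (idm B) f = f;
  comp_id_r : forall A B (f : hom A B), comp f (idm A) = f;
  comp_assoc : forall A B D E (h : hom D E) (g : hom B D) (f : hom A B),
      comp h (comp g f) = comp (comp h g) f }.

Notation "g ∘ f" := (comp g f) (at level 40, left associativity).

Section Basic.
Context {Ob : Type} {C : Category Ob}.

Definition epi {A B : Ob} (e : hom A B) : Prop :=
  forall D (g h : hom B D), g ∘ e = h ∘ e -> g = h.

Definition is_iso {A B : Ob} (f : hom A B) : Prop :=
  exists g : hom B A, g ∘ f = idm A /\ f ∘ g = idm B.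

Definition regular_epi {A B : Ob} (e : hom A B) : Prop :=
  exists (Z : Ob) (a b : hom Z A), e ∘ a = e ∘ b /\
    forall Q (h : hom A Q), h ∘ a = h ∘ b ->
      exists k : hom B Q, k ∘ e = h /\ forall k', k' ∘ e = h -> k' = k.

Definition is_pushout {A B D P : Ob} (f : hom A B) (g : hom A D)
    (i : hom B P) (j : hom D P) : Prop :=
  i ∘ f = j ∘ g /\
  forall Q (b : hom B Q) (d : hom D Q), b ∘ f = d ∘ g ->
    exists h : hom P Q, (h ∘ i = b /\ h ∘ j = d) /\
      forall h', h' ∘ i = b /\ h' ∘ j = d -> h' = h.
End Basic.

Class Monoidal (Ob : Type) {C : Category Ob} := {
  tens : Ob -> Ob -> Ob;
  tensm : forall {A B A' B'}, hom A A' -> hom B B' -> hom (tens A B) (tens A' B');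
  munit : Ob;
  asc : forall A B D, hom (tens (tens A B) D) (tens A (tens B D));
  asci : forall A B D, hom (tens A (tens B D)) (tens (tens A B) D);
  lu : forall A, hom (tens munit A) A;
  lui : forall A, hom A (tens munit A);
  ru : forall A, hom (tens A munit) A;
  rui : forall A, hom A (tens A munit);
  tensm_id : forall A B, tensm (idm A) (idm B) = idm (tens A B);
  tensm_comp : forall A1 A2 A3 B1 B2 B3 (f : hom A1 A2) (g : hom A2 A3)
      (f' : hom B1 B2) (g' : hom B2 B3),
      tensm (g ∘ f) (g' ∘ f') = tensm g g' ∘ tensm f f';
  asc_iso1 : forall A B D, asci A B D ∘ asc A B D = idm _;
  asc_iso2 : forall A B D, asc A B D ∘ asci A B D = idm _;
  lu_iso1 : forall A, lui A ∘ lu A = idm _;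
  lu_iso2 : forall A, lu A ∘ lui A = idm _;
  ru_iso1 : forall A, rui A ∘ ru A = idm _;
  ru_iso2 : forall A, ru A ∘ rui A = idm _;
  asc_nat : forall A B D A' B' D' (f : hom A A') (g : hom B B') (h : hom D D'),
      asc A' B' D' ∘ tensm (tensm f g) h = tensm f (tensm g h) ∘ asc A B D;
  lu_nat : forall A B (f : hom A B), lu B ∘ tensm (idm munit) f = f ∘ lu A;
  ru_nat : forall A B (f : hom A B), ru B ∘ tensm f (idm munit) = f ∘ ru A;
  pentagon : forall A B D E,
      tensm (idm A) (asc B D E) ∘ asc A (tens B D) E ∘ tensm (asc A B D) (idm E)
      = asc A B (tens D E) ∘ asc (tens A B) D E;
  triangle : forall A B,
      tensm (idm A) (lu B) ∘ asc A munit B = tensm (ru A) (idm B) }.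

Notation "A ⊗ B" := (tens A B) (at level 34, right associativity).
Notation "f ⊠ g" := (tensm f g) (at level 34, right associativity).

Class Braided (Ob : Type) {C : Category Ob} {M : @Monoidal Ob C} := {
  br : forall A B, hom (A ⊗ B) (B ⊗ A);
  bri : forall A B, hom (B ⊗ A) (A ⊗ B);
  br_iso1 : forall A B, bri A B ∘ br A B = idm _;
  br_iso2 : forall A B, br A B ∘ bri A B = idm _;
  br_nat : forall A B A' B' (f : hom A A') (g : hom B B'),
      br A' B' ∘ (f ⊠ g) = (g ⊠ f) ∘ br A B;
  hexagon1 : forall A B D,
      asc B D A ∘ br A (B ⊗ D) ∘ asc A B D
      = (idm B ⊠ br A D) ∘ asc B A D ∘ (br A B ⊠ idm D);
  hexagon2 : forall A B D,
      asci D A B ∘ br (A ⊗ B) D ∘ asci A B D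
      = (br A D ⊠ idm B) ∘ asci A D B ∘ (idm A ⊠ br B D) }.

(* Closedness: every functor - ⊗ Y has a right adjoint (internal hom with
   evaluation); in the braided setting this also gives Y ⊗ - a right adjoint. *)
Class Closed (Ob : Type) {C : Category Ob} {M : @Monoidal Ob C} := {
  ihom : Ob -> Ob -> Ob;
  ev : forall Y Z, hom (ihom Y Z ⊗ Y) Z;
  ev_univ : forall X Y Z (f : hom (X ⊗ Y) Z),
      exists g : hom X (ihom Y Z), ev Y Z ∘ (g ⊠ idm Y) = f /\
        forall g', ev Y Z ∘ (g' ⊠ idm Y) = f -> g' = g }.

Class HasPushouts (Ob : Type) {C : Category Ob} := {
  po_ob : forall {A B D}, hom A B -> hom A D -> Ob;
  po_inl : forall {A B D} (f : hom A B) (g : hom A D), hom B (po_ob f g);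
  po_inr : forall {A B D} (f : hom A B) (g : hom A D), hom D (po_ob f g);
  po_spec : forall A B D (f : hom A B) (g : hom A D),
      is_pushout f g (po_inl f g) (po_inr f g) }.

Section Monoidal_defs.
Context {Ob : Type} {C : Category Ob} {M : @Monoidal Ob C} {Br : @Braided Ob C M}.

Definition tensor_preserves_pushouts : Prop :=
  forall (Y A B D P : Ob) (f : hom A B) (g : hom A D) (i : hom B P) (j : hom D P),
    is_pushout f g i j ->
    is_pushout (f ⊠ idm Y) (g ⊠ idm Y) (i ⊠ idm Y) (j ⊠ idm Y) /\
    is_pushout (idm Y ⊠ f) (idm Y ⊠ g) (idm Y ⊠ i) (idm Y ⊠ j).

Definition all_epis_regular : Prop :=
  forall (A B : Ob) (e : hom A B), epi e -> regular_epi e.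

Definition shuf (A B D E : Ob) : hom ((A ⊗ B) ⊗ (D ⊗ E)) ((A ⊗ D) ⊗ (B ⊗ E)) :=
  asci A D (B ⊗ E) ∘ (idm A ⊠ asc D B E) ∘ (idm A ⊠ (br B D ⊠ idm E))
  ∘ (idm A ⊠ asci B D E) ∘ asc A B (D ⊗ E).

Definition tmul {A B : Ob} (mA : hom (A ⊗ A) A) (mB : hom (B ⊗ B) B)
  : hom ((A ⊗ B) ⊗ (A ⊗ B)) (A ⊗ B) := (mA ⊠ mB) ∘ shuf A B A B.
Definition tunit {A B : Ob} (uA : hom munit A) (uB : hom munit B)
  : hom munit (A ⊗ B) := (uA ⊠ uB) ∘ lui munit.

Definition is_algebra {A : Ob} (m : hom (A ⊗ A) A) (u : hom munit A) : Prop :=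
  m ∘ (m ⊠ idm A) = m ∘ (idm A ⊠ m) ∘ asc A A A /\
  m ∘ (u ⊠ idm A) ∘ lui A = idm A /\
  m ∘ (idm A ⊠ u) ∘ rui A = idm A.

Definition is_alg_morph {A B : Ob} (mA : hom (A ⊗ A) A) (uA : hom munit A)
    (mB : hom (B ⊗ B) B) (uB : hom munit B) (f : hom A B) : Prop :=
  f ∘ mA = mB ∘ (f ⊠ f) /\ f ∘ uA = uB.

Record HopfAlg (H : Ob) := {
  hmul : hom (H ⊗ H) H;
  hunit : hom munit H;
  hcomul : hom H (H ⊗ H);
  hcounit : hom H munit;
  hanti : hom H H;
  h_assoc : hmul ∘ (hmul ⊠ idm H) = hmul ∘ (idm H ⊠ hmul) ∘ asc H H H;
  h_unitl : hmul ∘ (hunit ⊠ idm H) = lu H;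
  h_unitr : hmul ∘ (idm H ⊠ hunit) = ru H;
  h_coassoc : asc H H H ∘ (hcomul ⊠ idm H) ∘ hcomul = (idm H ⊠ hcomul) ∘ hcomul;
  h_counitl : lu H ∘ (hcounit ⊠ idm H) ∘ hcomul = idm H;
  h_counitr : ru H ∘ (idm H ⊠ hcounit) ∘ hcomul = idm H;
  h_comul_mul : hcomul ∘ hmul = tmul hmul hmul ∘ (hcomul ⊠ hcomul);
  h_comul_unit : hcomul ∘ hunit = tunit hunit hunit;
  h_counit_mul : hcounit ∘ hmul = lu munit ∘ (hcounit ⊠ hcounit);
  h_counit_unit : hcounit ∘ hunit = idm munit;
  h_antipode_l : hmul ∘ (hanti ⊠ idm H) ∘ hcomul = hunit ∘ hcounit;
  h_antipode_r : hmul ∘ (idm H ⊠ hanti) ∘ hcomul = hunit ∘ hcounit }.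

End Monoidal_defs.

Section PComod.
Context {Ob : Type} {C : Category Ob} {M : @Monoidal Ob C} {Br : @Braided Ob C M}
        {PO : @HasPushouts Ob C}.

(* (X, XH, pi, rho) is a quasi partial comodule over H:
   pi epi, pi_{X,eps} iso with (X•eps) rho = pi_{X,eps} r_X, and
   theta1 (rho•H) rho = theta2 pi'_X (X•Delta) rho. *)
Definition quasi_pcomod {H : Ob} (HH : HopfAlg H) (X XH : Ob)
    (pi : hom (X ⊗ H) XH) (rho : hom X XH) : Prop :=
  epi pi /\
  is_iso (po_inr pi (idm X ⊠ hcounit HH)) /\
  po_inl pi (idm X ⊠ hcounit HH) ∘ rho = po_inr pi (idm X ⊠ hcounit HH) ∘ rui X /\
  (let rhoH := po_inl pi (rho ⊠ idm H) in
   let piXH := po_inr pi (rho ⊠ idm H) in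
   let XDel := po_inl pi (idm X ⊠ hcomul HH) in
   let piXDel := po_inr pi (idm X ⊠ hcomul HH) in
   let pi' := po_inl piXDel ((pi ⊠ idm H) ∘ asci X H H) in
   let pi'Del := po_inr piXDel ((pi ⊠ idm H) ∘ asci X H H) in
   let th1 := po_inl piXH pi'Del in
   let th2 := po_inr piXH pi'Del in
   th1 ∘ rhoH ∘ rho = th2 ∘ pi' ∘ XDel ∘ rho).

Definition mu_XY {H : Ob} (HH : HopfAlg H) (X Y : Ob)
  : hom ((X ⊗ H) ⊗ (Y ⊗ H)) ((X ⊗ Y) ⊗ H) :=
  (idm (X ⊗ Y) ⊠ hmul HH) ∘ shuf X H Y H.

Definition tens_bullet {H : Ob} (HH : HopfAlg H) {X XH Y YH : Ob}
    (piX : hom (X ⊗ H) XH) (piY : hom (Y ⊗ H) YH) : Ob :=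
  po_ob (piX ⊠ piY) (mu_XY HH X Y).
Definition tens_mubar {H : Ob} (HH : HopfAlg H) {X XH Y YH : Ob}
    (piX : hom (X ⊗ H) XH) (piY : hom (Y ⊗ H) YH)
  : hom (XH ⊗ YH) (tens_bullet HH piX piY) :=
  po_inl (piX ⊠ piY) (mu_XY HH X Y).
Definition tens_pi {H : Ob} (HH : HopfAlg H) {X XH Y YH : Ob}
    (piX : hom (X ⊗ H) XH) (piY : hom (Y ⊗ H) YH)
  : hom ((X ⊗ Y) ⊗ H) (tens_bullet HH piX piY) :=
  po_inr (piX ⊠ piY) (mu_XY HH X Y).
Definition tens_rho {H : Ob} (HH : HopfAlg H) {X XH Y YH : Ob}
    (piX : hom (X ⊗ H) XH) (piY : hom (Y ⊗ H) YH)
    (rhoX : hom X XH) (rhoY : hom Y YH)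
  : hom (X ⊗ Y) (tens_bullet HH piX piY) :=
  tens_mubar HH piX piY ∘ (rhoX ⊠ rhoY).

(* Morphisms of qPMod^H are pairs (f, f•H); since pi is epi, f•H is
   determined by f, so equalities of morphisms are equalities of the
   C-components. The unit object is I = (k, H, id_H, eta_H), where
   k ⊗ H is identified with H via the left unitor. *)
Definition qPMod_algebra {H : Ob} (HH : HopfAlg H) (A AH : Ob)
    (piA : hom (A ⊗ H) AH) (rhoA : hom A AH)
    (m : hom (A ⊗ A) A) (mH : hom (tens_bullet HH piA piA) AH)
    (u : hom munit A) (uH : hom H AH) : Prop :=
  quasi_pcomod HH piA rhoA /\
  mH ∘ tens_pi HH piA piA = piA ∘ (m ⊠ idm H) /\
  mH ∘ tens_rho HH piA piA rhoA rhoA = rhoA ∘ m /\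
  uH ∘ lu H = piA ∘ (u ⊠ idm H) /\
  uH ∘ hunit HH = rhoA ∘ u /\
  m ∘ (m ⊠ idm A) = m ∘ (idm A ⊠ m) ∘ asc A A A /\
  m ∘ (idm A ⊠ u) ∘ rui A = idm A /\
  m ∘ (u ⊠ idm A) ∘ lui A = idm A.

End PComod.

Arguments qPMod_algebra {Ob C M Br PO H} HH {A AH} piA rhoA m mH u uH.

(* The algebra [A • H] has multiplication [m•H ∘ mubar] and unit [ρ ∘ u]. The
   pushout square defining [(A ⊗ A) • H], together with [m•H] being a morphism,
   says that [π] intertwines the tensor product algebra [A ⊗ H] with these maps,
   and [ρ] is multiplicative because [m] is a morphism. As [A ⊗ H] is an algebra
   (a coherence computation in the braided category) and [π ⊗ π ⊗ π] is epi
   (tensoring preserves pushouts, hence epimorphisms), the algebra laws descend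
   from [A ⊗ H] to [A • H] along [π]. *)

From Stdlib Require Import ssreflect.
Set Implicit Arguments.
Unset Strict Implicit.

Ltac rassoc := repeat rewrite <- comp_assoc.

(* Composites are kept right-associated; a lemma suffixed [_k] is an equation
   between composites applied to an arbitrary tail [k], so that it can rewrite
   inside such a chain. *)

Section Monoidal.
Context {Ob : Type} {C : Category Ob} {M : @Monoidal Ob C}.

Lemma tail_id (A B : Ob) (f g : hom A B) : f ∘ idm A = g ∘ idm A -> f = g.
Proof. by rewrite !comp_id_r. Qed.

Lemma iso_cancel_l A B D (X : hom B D) (Y : hom D B) (f g : hom A B) :
  Y ∘ X = idm B -> X ∘ f = X ∘ g -> f = g.
Proof. by move=> iso e; rewrite -(comp_id_l f) -(comp_id_l g) -iso -!comp_assoc e. Qed.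

Lemma iso_cancel_r A B D (X : hom A B) (Y : hom B A) (f g : hom B D) :
  X ∘ Y = idm B -> f ∘ X = g ∘ X -> f = g.
Proof. by move=> iso e; rewrite -(comp_id_r f) -(comp_id_r g) -iso !comp_assoc e. Qed.

Lemma tensm_comp_idr (A B D E : Ob) (f : hom A B) (g : hom B D) :
  (g ∘ f) ⊠ idm E = (g ⊠ idm E) ∘ (f ⊠ idm E).
Proof. by rewrite -tensm_comp comp_id_l. Qed.

Lemma tensm_comp_idl (A B D E : Ob) (f : hom A B) (g : hom B D) :
  idm E ⊠ (g ∘ f) = (idm E ⊠ g) ∘ (idm E ⊠ f).
Proof. by rewrite -tensm_comp comp_id_l. Qed.

Lemma tensm_split_l (A B D E : Ob) (f : hom A B) (g : hom D E) :
  f ⊠ g = (f ⊠ idm E) ∘ (idm A ⊠ g).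
Proof. by rewrite -tensm_comp comp_id_l comp_id_r. Qed.

Lemma tensm_split_r (A B D E : Ob) (f : hom A B) (g : hom D E) :
  f ⊠ g = (idm B ⊠ g) ∘ (f ⊠ idm D).
Proof. by rewrite -tensm_comp comp_id_l comp_id_r. Qed.

Lemma tensm_comp_split_l A B D D' E (f : hom A B) (g : hom D' E) (h : hom D D') :
  (g ∘ h) ⊠ f = (g ⊠ f) ∘ (h ⊠ idm A).
Proof. by rewrite -tensm_comp comp_id_r. Qed.

Lemma tensm_comp_split_r A B D D' E (f : hom A B) (g : hom D' E) (h : hom D D') :
  f ⊠ (g ∘ h) = (f ⊠ g) ∘ (idm A ⊠ h).
Proof. by rewrite -tensm_comp comp_id_r. Qed.

Lemma tensm_comp_k A1 A2 A3 B1 B2 B3 E (f : hom A1 A2) (g : hom A2 A3)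
    (f' : hom B1 B2) (g' : hom B2 B3) (k : hom E _) :
  (g ⊠ g') ∘ ((f ⊠ f') ∘ k) = ((g ∘ f) ⊠ (g' ∘ f')) ∘ k.
Proof. by rewrite comp_assoc tensm_comp. Qed.

Lemma asc_nat_k A B D A' B' D' E (f : hom A A') (g : hom B B') (h : hom D D')
    (k : hom E _) :
  asc A' B' D' ∘ (((f ⊠ g) ⊠ h) ∘ k) = (f ⊠ (g ⊠ h)) ∘ (asc A B D ∘ k).
Proof. by rewrite !comp_assoc asc_nat. Qed.

Lemma asci_nat_k A B D A' B' D' E (f : hom A A') (g : hom B B') (h : hom D D')
    (k : hom E _) :
  asci A' B' D' ∘ ((f ⊠ (g ⊠ h)) ∘ k) = ((f ⊠ g) ⊠ h) ∘ (asci A B D ∘ k).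
Proof.
  have e : asci A' B' D' ∘ (f ⊠ (g ⊠ h)) = ((f ⊠ g) ⊠ h) ∘ asci A B D.
    rewrite -[f ⊠ (g ⊠ h)]comp_id_r -(asc_iso2 A B D) (comp_assoc (f ⊠ (g ⊠ h))).
    by rewrite -asc_nat !comp_assoc asc_iso1 comp_id_l.
  by rewrite !comp_assoc e.
Qed.

Lemma asci_asc_k A B D E (k : hom E _) : asci A B D ∘ (asc A B D ∘ k) = k.
Proof. by rewrite comp_assoc asc_iso1 comp_id_l. Qed.
Lemma asc_asci_k A B D E (k : hom E _) : asc A B D ∘ (asci A B D ∘ k) = k.
Proof. by rewrite comp_assoc asc_iso2 comp_id_l. Qed.
Lemma lu_lui_k A E (k : hom E _) : lu A ∘ (lui A ∘ k) = k.
Proof. by rewrite comp_assoc lu_iso2 comp_id_l. Qed.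
Lemma lui_lu_k A E (k : hom E _) : lui A ∘ (lu A ∘ k) = k.
Proof. by rewrite comp_assoc lu_iso1 comp_id_l. Qed.
Lemma ru_rui_k A E (k : hom E _) : ru A ∘ (rui A ∘ k) = k.
Proof. by rewrite comp_assoc ru_iso2 comp_id_l. Qed.
Lemma rui_ru_k A E (k : hom E _) : rui A ∘ (ru A ∘ k) = k.
Proof. by rewrite comp_assoc ru_iso1 comp_id_l. Qed.

Lemma lu_nat_k A B E (f : hom A B) (k : hom E _) :
  lu B ∘ ((idm munit ⊠ f) ∘ k) = f ∘ (lu A ∘ k).
Proof. by rewrite !comp_assoc lu_nat. Qed.
Lemma ru_nat_k A B E (f : hom A B) (k : hom E _) :
  ru B ∘ ((f ⊠ idm munit) ∘ k) = f ∘ (ru A ∘ k).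
Proof. by rewrite !comp_assoc ru_nat. Qed.
Lemma lui_nat_k A B E (f : hom A B) (k : hom E _) :
  lui B ∘ (f ∘ k) = (idm munit ⊠ f) ∘ (lui A ∘ k).
Proof. by rewrite -[in LHS](lu_lui_k k) -lu_nat_k lui_lu_k. Qed.
Lemma rui_nat_k A B E (f : hom A B) (k : hom E _) :
  rui B ∘ (f ∘ k) = (f ⊠ idm munit) ∘ (rui A ∘ k).
Proof. by rewrite -[in LHS](ru_rui_k k) -ru_nat_k rui_ru_k. Qed.

Lemma pentagon_k A B D E F (k : hom F _) :
  (idm A ⊠ asc B D E) ∘ (asc A (B ⊗ D) E ∘ ((asc A B D ⊠ idm E) ∘ k))
  = asc A B (D ⊗ E) ∘ (asc (A ⊗ B) D E ∘ k).
Proof. by rewrite !comp_assoc pentagon. Qed.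
Lemma triangle_k A B E (k : hom E _) :
  (idm A ⊠ lu B) ∘ (asc A munit B ∘ k) = (ru A ⊠ idm B) ∘ k.
Proof. by rewrite comp_assoc triangle. Qed.

Lemma triangle_asci A B : (ru A ⊠ idm B) ∘ asci A munit B = idm A ⊠ lu B.
Proof. by rewrite -triangle -comp_assoc asc_iso2 comp_id_r. Qed.
Lemma triangle_asci_k A B E (k : hom E _) :
  (ru A ⊠ idm B) ∘ (asci A munit B ∘ k) = (idm A ⊠ lu B) ∘ k.
Proof. by rewrite comp_assoc triangle_asci. Qed.

Lemma unit_tensm_inj A B (f g : hom A B) : idm munit ⊠ f = idm munit ⊠ g -> f = g.
Proof.
  move=> e; apply: (iso_cancel_r (lu_iso2 A)).
  by rewrite -!lu_nat e.
Qed.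
Lemma tensm_unit_inj A B (f g : hom A B) : f ⊠ idm munit = g ⊠ idm munit -> f = g.
Proof.
  move=> e; apply: (iso_cancel_r (ru_iso2 A)).
  by rewrite -!ru_nat e.
Qed.

Lemma lu_asc A B : lu (A ⊗ B) ∘ asc munit A B = lu A ⊠ idm B.
Proof.
  apply: unit_tensm_inj.
  apply: (iso_cancel_r
            (X := asc munit (munit ⊗ A) B ∘ (asc munit munit A ⊠ idm B))
            (Y := (asci munit munit A ⊠ idm B) ∘ asci munit (munit ⊗ A) B)).
    by rewrite -comp_assoc (comp_assoc (asc munit munit A ⊠ idm B)) -tensm_comp
               asc_iso2 comp_id_l tensm_id comp_id_l asc_iso2.
  apply: tail_id; rassoc.
  rewrite tensm_comp_idl; rassoc.
  rewrite pentagon_k triangle_k -(tensm_id A B) -asc_nat_k -triangle tensm_comp_idr.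
  by rassoc; rewrite asc_nat_k.
Qed.
Lemma lu_asc_k A B E (k : hom E _) :
  lu (A ⊗ B) ∘ (asc munit A B ∘ k) = (lu A ⊠ idm B) ∘ k.
Proof. by rewrite comp_assoc lu_asc. Qed.
Lemma lu_asci_k A B E (k : hom E _) :
  (lu A ⊠ idm B) ∘ (asci munit A B ∘ k) = lu (A ⊗ B) ∘ k.
Proof. by rewrite -lu_asc_k asc_asci_k. Qed.

Lemma ru_asc A B : (idm A ⊠ ru B) ∘ asc A B munit = ru (A ⊗ B).
Proof.
  apply: tensm_unit_inj.
  apply: (iso_cancel_l (asc_iso1 A B munit)).
  apply: tail_id; rassoc.
  rewrite tensm_comp_idr; rassoc.
  rewrite asc_nat_k -(triangle B munit) tensm_comp_idl; rassoc.
  by rewrite pentagon_k -asc_nat_k tensm_id triangle_k.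
Qed.
Lemma ru_asc_k A B E (k : hom E _) :
  (idm A ⊠ ru B) ∘ (asc A B munit ∘ k) = ru (A ⊗ B) ∘ k.
Proof. by rewrite comp_assoc ru_asc. Qed.
Lemma ru_asci A B : ru (A ⊗ B) ∘ asci A B munit = idm A ⊠ ru B.
Proof. by rewrite -ru_asc -comp_assoc asc_iso2 comp_id_r. Qed.
Lemma ru_asci_k A B E (k : hom E _) :
  ru (A ⊗ B) ∘ (asci A B munit ∘ k) = (idm A ⊠ ru B) ∘ k.
Proof. by rewrite comp_assoc ru_asci. Qed.

Lemma lu_unit_ru : lu munit = ru (@munit Ob C M).
Proof.
  have lu_unit_tens : lu (munit ⊗ munit) = idm munit ⊠ lu munit.
    by apply: (iso_cancel_l (lu_iso1 munit)); rewrite lu_nat.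
  by apply: tensm_unit_inj; rewrite -lu_asc lu_unit_tens triangle.
Qed.

End Monoidal.

Section Braided.
Context {Ob : Type} {C : Category Ob} {M : @Monoidal Ob C} {Br : @Braided Ob C M}.

Lemma br_nat_k A B A' B' E (f : hom A A') (g : hom B B') (k : hom E _) :
  br A' B' ∘ ((f ⊠ g) ∘ k) = (g ⊠ f) ∘ (br A B ∘ k).
Proof. by rewrite !comp_assoc br_nat. Qed.
Lemma hexagon1_k A B D E (k : hom E _) :
  asc B D A ∘ (br A (B ⊗ D) ∘ (asc A B D ∘ k)) =
  (idm B ⊠ br A D) ∘ (asc B A D ∘ ((br A B ⊠ idm D) ∘ k)).
Proof. by rewrite !comp_assoc hexagon1. Qed.
Lemma hexagon2_k A B D E (k : hom E _) :
  asci D A B ∘ (br (A ⊗ B) D ∘ (asci A B D ∘ k)) =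
  (br A D ⊠ idm B) ∘ (asci A D B ∘ ((idm A ⊠ br B D) ∘ k)).
Proof. by rewrite !comp_assoc hexagon2. Qed.

Lemma lu_br A : lu A ∘ br A munit = ru A.
Proof.
  symmetry; apply: tensm_unit_inj.
  apply: (iso_cancel_l (br_iso1 A munit)).
  apply: tail_id; rassoc.
  rewrite -(triangle A munit); rassoc.
  rewrite br_nat_k -lu_asc; rassoc.
  by rewrite hexagon1_k lu_nat_k lu_asc_k tensm_comp_k !comp_id_l.
Qed.
Lemma ru_br A : ru A ∘ br munit A = lu A.
Proof.
  symmetry; apply: unit_tensm_inj.
  apply: (iso_cancel_l (br_iso1 munit A)).
  apply: tail_id; rassoc.
  rewrite -(triangle_asci munit A); rassoc.
  rewrite br_nat_k -ru_asci; rassoc.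
  by rewrite hexagon2_k ru_nat_k ru_asci_k tensm_comp_k !comp_id_l.
Qed.

Lemma br_tens_r A B D : br A (B ⊗ D) =
  asci B D A ∘ (idm B ⊠ br A D) ∘ asc B A D ∘ (br A B ⊠ idm D) ∘ asci A B D.
Proof. by rewrite -!comp_assoc -hexagon1_k asci_asc_k asc_iso2 comp_id_r. Qed.
Lemma br_tens_l A B D : br (A ⊗ B) D =
  asc D A B ∘ (br A D ⊠ idm B) ∘ asci A D B ∘ (idm A ⊠ br B D) ∘ asc A B D.
Proof. by rewrite -!comp_assoc -hexagon2_k asc_asci_k asc_iso1 comp_id_r. Qed.

Lemma br_tensm_nat_k A B A' B' D D' E (f : hom A A') (g : hom B B') (h : hom D D')
    (k : hom E _) :
  (br A' B' ⊠ idm D') ∘ (((f ⊠ g) ⊠ h) ∘ k) = ((g ⊠ f) ⊠ h) ∘ ((br A B ⊠ idm D) ∘ k).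
Proof. by rewrite !comp_assoc -!tensm_comp br_nat comp_id_l comp_id_r. Qed.

Lemma pentagon_tensm_asci_k A B D E F (k : hom F _) :
  (idm A ⊠ asc B D E) ∘ (asc A (B ⊗ D) E ∘ k)
  = asc A B (D ⊗ E) ∘ (asc (A ⊗ B) D E ∘ ((asci A B D ⊠ idm E) ∘ k)).
Proof. by rewrite -pentagon_k tensm_comp_k asc_iso2 comp_id_l tensm_id comp_id_l. Qed.
Lemma pentagon_idm_asci_k A B D E F (k : hom F _) :
  asc A (B ⊗ D) E ∘ ((asc A B D ⊠ idm E) ∘ k)
  = (idm A ⊠ asci B D E) ∘ (asc A B (D ⊗ E) ∘ (asc (A ⊗ B) D E ∘ k)).
Proof. by rewrite -pentagon_k tensm_comp_k asc_iso1 comp_id_l tensm_id comp_id_l. Qed.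
Lemma pentagon_asci_k A B D E F (k : hom F _) :
  asci A B (D ⊗ E) ∘ ((idm A ⊠ asc B D E) ∘ (asc A (B ⊗ D) E ∘ k))
  = asc (A ⊗ B) D E ∘ ((asci A B D ⊠ idm E) ∘ k).
Proof. by rewrite pentagon_tensm_asci_k asci_asc_k. Qed.
Lemma pentagon_inv_k A B D E F (k : hom F _) :
  asc (A ⊗ B) D E ∘ ((asci A B D ⊠ idm E) ∘ (asci A (B ⊗ D) E ∘ k))
  = asci A B (D ⊗ E) ∘ ((idm A ⊠ asc B D E) ∘ k).
Proof.
  apply: (iso_cancel_l (asc_iso1 A B (D ⊗ E))).
  by rewrite asc_asci_k -pentagon_tensm_asci_k asc_asci_k.
Qed.

Definition br12 (Y Z W : Ob) : hom (Y ⊗ (Z ⊗ W)) (Z ⊗ (Y ⊗ W)) :=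
  asc Z Y W ∘ (br Y Z ⊠ idm W) ∘ asci Y Z W.

Lemma br12_nat_k Y Z W Y' Z' W' E (f : hom Y Y') (g : hom Z Z') (h : hom W W')
    (k : hom E _) :
  br12 Y' Z' W' ∘ ((f ⊠ (g ⊠ h)) ∘ k) = (g ⊠ (f ⊠ h)) ∘ (br12 Y Z W ∘ k).
Proof. by rewrite /br12; rassoc; rewrite asci_nat_k br_tensm_nat_k asc_nat_k. Qed.

Lemma br12_nat Y Z W Y' Z' W' (f : hom Y Y') (g : hom Z Z') (h : hom W W') :
  br12 Y' Z' W' ∘ (f ⊠ (g ⊠ h)) = (g ⊠ (f ⊠ h)) ∘ br12 Y Z W.
Proof. by apply: tail_id; rassoc; apply: br12_nat_k. Qed.

Lemma br12_tens_l Y Z D W :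
  (idm D ⊠ asc Y Z W) ∘ br12 (Y ⊗ Z) D W
  = br12 Y D (Z ⊗ W) ∘ (idm Y ⊠ br12 Z D W) ∘ asc Y Z (D ⊗ W).
Proof.
  apply: tail_id; rewrite /br12 br_tens_l; rassoc.
  rewrite !tensm_comp_idr !tensm_comp_idl; rassoc.
  by rewrite pentagon_k asc_nat_k -pentagon_asci_k asc_nat_k pentagon_idm_asci_k
             asc_asci_k tensm_id.
Qed.

Lemma br12_tens_r Y Z D W :
  asc Z D (Y ⊗ W) ∘ br12 Y (Z ⊗ D) W
  = (idm Z ⊠ br12 Y D W) ∘ br12 Y Z (D ⊗ W) ∘ (idm Y ⊠ asc Z D W).
Proof.
  apply: tail_id; rewrite /br12 br_tens_r; rassoc.
  rewrite !tensm_comp_idr !tensm_comp_idl; rassoc.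
  by rewrite -pentagon_tensm_asci_k asc_nat_k pentagon_idm_asci_k asc_nat_k
             pentagon_inv_k tensm_id.
Qed.

Lemma br12_asc Y Z D W :
  (idm Z ⊠ asc Y D W) ∘ asc Z (Y ⊗ D) W ∘ (br12 Y Z D ⊠ idm W)
  = br12 Y Z (D ⊗ W) ∘ (idm Y ⊠ asc Z D W) ∘ asc Y (Z ⊗ D) W.
Proof.
  apply: tail_id; rewrite /br12; rassoc; rewrite !tensm_comp_idr; rassoc.
  by rewrite pentagon_k asc_nat_k tensm_id pentagon_asci_k.
Qed.

End Braided.

Section Shuffle.
Context {Ob : Type} {C : Category Ob} {M : @Monoidal Ob C} {Br : @Braided Ob C M}.

Lemma shuf_br12 A B D E :
  shuf A B D E = asci A D (B ⊗ E) ∘ (idm A ⊠ br12 B D E) ∘ asc A B (D ⊗ E).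
Proof. by rewrite /shuf /br12 !tensm_comp_idl; rassoc. Qed.

Lemma shuf_nat A B D E A' B' D' E' (f : hom A A') (g : hom B B') (h : hom D D')
    (l : hom E E') :
  shuf A' B' D' E' ∘ ((f ⊠ g) ⊠ (h ⊠ l)) = ((f ⊠ h) ⊠ (g ⊠ l)) ∘ shuf A B D E.
Proof.
  apply: tail_id; rewrite !shuf_br12; rassoc.
  rewrite asc_nat_k tensm_comp_k comp_id_l br12_nat tensm_comp_split_r; rassoc.
  by rewrite asci_nat_k.
Qed.

Lemma br12_idm_tensm_k X Y Z W W' F (g : hom W W') (k : hom F _) :
  (idm X ⊠ br12 Y Z W') ∘ ((idm X ⊠ (idm Y ⊠ (idm Z ⊠ g))) ∘ k)
  = (idm X ⊠ (idm Z ⊠ (idm Y ⊠ g))) ∘ ((idm X ⊠ br12 Y Z W) ∘ k).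
Proof. by rewrite !tensm_comp_k !comp_id_l br12_nat. Qed.
Lemma br12_tens_l_idm_k X Y Z D W F (k : hom F _) :
  (idm X ⊠ (idm D ⊠ asc Y Z W)) ∘ ((idm X ⊠ br12 (Y ⊗ Z) D W) ∘ k)
  = (idm X ⊠ br12 Y D (Z ⊗ W)) ∘ ((idm X ⊠ (idm Y ⊠ br12 Z D W))
      ∘ ((idm X ⊠ asc Y Z (D ⊗ W)) ∘ k)).
Proof. by rewrite !tensm_comp_k !comp_id_l br12_tens_l. Qed.
Lemma br12_tens_r_idm_k X Y Z D W F (k : hom F _) :
  (idm X ⊠ asc Z D (Y ⊗ W)) ∘ ((idm X ⊠ br12 Y (Z ⊗ D) W) ∘ k)
  = (idm X ⊠ (idm Z ⊠ br12 Y D W)) ∘ ((idm X ⊠ br12 Y Z (D ⊗ W))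
      ∘ ((idm X ⊠ (idm Y ⊠ asc Z D W)) ∘ k)).
Proof. by rewrite !tensm_comp_k !comp_id_l br12_tens_r. Qed.
Lemma br12_asc_idm_k X Y Z D W F (k : hom F _) :
  (idm X ⊠ (idm Z ⊠ asc Y D W)) ∘ ((idm X ⊠ asc Z (Y ⊗ D) W)
      ∘ ((idm X ⊠ (br12 Y Z D ⊠ idm W)) ∘ k))
  = (idm X ⊠ br12 Y Z (D ⊗ W)) ∘ ((idm X ⊠ (idm Y ⊠ asc Z D W))
      ∘ ((idm X ⊠ asc Y (Z ⊗ D) W) ∘ k)).
Proof. by rewrite !tensm_comp_k !comp_id_l br12_asc. Qed.
Lemma idm_asc_asci_k X A B D F (k : hom F _) :
  (idm X ⊠ asc A B D) ∘ ((idm X ⊠ asci A B D) ∘ k) = k.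
Proof. by rewrite tensm_comp_k comp_id_l asc_iso2 tensm_id comp_id_l. Qed.
Lemma idm_idm_asc_asci_k X Y A B D F (k : hom F _) :
  (idm X ⊠ (idm Y ⊠ asc A B D)) ∘ ((idm X ⊠ (idm Y ⊠ asci A B D)) ∘ k) = k.
Proof. by rewrite tensm_comp_k comp_id_l -tensm_comp_idl asc_iso2 !tensm_id comp_id_l. Qed.

(* Written with [shuf_br12], the two sides differ only by the [br12] identities
   above, whiskered by [idm a ⊠ -]. *)
Lemma shuf_assoc a b c d e f :
  (asc a c e ⊠ asc b d f) ∘ shuf (a ⊗ c) (b ⊗ d) e f ∘ (shuf a b c d ⊠ idm (e ⊗ f))
  = shuf a b (c ⊗ e) (d ⊗ f) ∘ (idm (a ⊗ b) ⊠ shuf c d e f) ∘ asc (a ⊗ b) (c ⊗ d) (e ⊗ f).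
Proof.
  apply: (iso_cancel_l
            (X := (idm a ⊠ asc c e (b ⊗ (d ⊗ f))) ∘ asc a (c ⊗ e) (b ⊗ (d ⊗ f)))
            (Y := asci a (c ⊗ e) (b ⊗ (d ⊗ f)) ∘ (idm a ⊠ asci c e (b ⊗ (d ⊗ f))))).
    by rewrite -!comp_assoc tensm_comp_k comp_id_l asc_iso1 tensm_id comp_id_l asc_iso1.
  apply: tail_id; rewrite !shuf_br12; rassoc.
  rewrite (tensm_split_l (asc a c e)); rassoc.
  rewrite pentagon_k -(tensm_id (a ⊗ c) e) asc_nat_k asc_asci_k br12_tens_l_idm_k.
  rewrite !tensm_comp_idr; rassoc.
  rewrite -(tensm_id a c) !asc_nat_k -pentagon_tensm_asci_k asc_nat_k pentagon_idm_asci_k.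
  rewrite asc_asci_k br12_tens_r_idm_k !(@tensm_comp_idl _ _ _ _ _ _ (a ⊗ b)); rassoc.
  rewrite -(tensm_id a b) !asc_nat_k idm_idm_asc_asci_k br12_idm_tensm_k br12_asc_idm_k.
  by rewrite idm_asc_asci_k.
Qed.

Lemma lu_br12 A B : (idm A ⊠ lu B) ∘ br12 munit A B = lu (A ⊗ B).
Proof.
  by apply: tail_id; rewrite /br12; rassoc;
     rewrite triangle_k tensm_comp_k ru_br comp_id_l lu_asci_k.
Qed.
Lemma lu_br12_unit B : lu (B ⊗ munit) ∘ br12 B munit munit = idm B ⊠ lu munit.
Proof.
  by apply: tail_id; rewrite /br12; rassoc;
     rewrite lu_asc_k tensm_comp_k lu_br comp_id_l triangle_asci_k.
Qed.

Lemma shuf_lui A B :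
  shuf munit munit A B ∘ (lui munit ⊠ idm (A ⊗ B)) ∘ lui (A ⊗ B) = lui A ⊠ lui B.
Proof.
  apply: (iso_cancel_l (X := lu A ⊠ lu B) (Y := lui A ⊠ lui B)).
    by rewrite -tensm_comp !lu_iso1 tensm_id.
  rewrite -tensm_comp !lu_iso2 tensm_id.
  apply: tail_id; rewrite shuf_br12; rassoc; rewrite (tensm_split_l (lu A)); rassoc.
  rewrite -(tensm_id munit A) -asci_nat_k lu_asci_k tensm_comp_k comp_id_l lu_br12.
  rewrite triangle_k tensm_comp_k -lu_unit_ru lu_iso2 !comp_id_l tensm_id !comp_id_l.
  by rewrite lu_lui_k.
Qed.

Lemma shuf_rui A B :
  shuf A B munit munit ∘ (idm (A ⊗ B) ⊠ lui munit) ∘ rui (A ⊗ B) = rui A ⊠ rui B.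
Proof.
  apply: (iso_cancel_l (X := ru A ⊠ ru B) (Y := rui A ⊠ rui B)).
    by rewrite -tensm_comp !ru_iso1 tensm_id.
  rewrite -tensm_comp !ru_iso2 tensm_id.
  apply: tail_id; rewrite shuf_br12; rassoc; rewrite (tensm_split_r (ru A)); rassoc.
  rewrite triangle_asci_k !tensm_comp_k !comp_id_l.
  rewrite -(comp_assoc (ru B)) lu_br12_unit tensm_comp_idl; rassoc.
  rewrite -asc_nat_k tensm_id tensm_comp_k comp_id_l lu_iso2 tensm_id comp_id_l ru_asc_k.
  by rewrite ru_rui_k.
Qed.

End Shuffle.

Section TensorAlgebra.
Context {Ob : Type} {C : Category Ob} {M : @Monoidal Ob C} {Br : @Braided Ob C M}.

(* Reassociating composites would unfold [shuf]; its locked copy prevents it. *)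
Definition lshuf := locked (@shuf Ob C M Br).
Lemma lshufE A B D E : shuf A B D E = lshuf A B D E.
Proof. by rewrite /lshuf -lock. Qed.

Lemma lshuf_nat_k A B D E A' B' D' E' F (f : hom A A') (g : hom B B') (h : hom D D')
    (l : hom E E') (k : hom F _) :
  lshuf A' B' D' E' ∘ (((f ⊠ g) ⊠ (h ⊠ l)) ∘ k) = ((f ⊠ h) ⊠ (g ⊠ l)) ∘ (lshuf A B D E ∘ k).
Proof. by rewrite -!lshufE (comp_assoc (shuf A' B' D' E')) shuf_nat -comp_assoc. Qed.

Lemma lshuf_assoc_k a b c d e f F (k : hom F _) :
  (asc a c e ⊠ asc b d f) ∘ (lshuf (a ⊗ c) (b ⊗ d) e f
      ∘ ((lshuf a b c d ⊠ (idm e ⊠ idm f)) ∘ k))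
  = lshuf a b (c ⊗ e) (d ⊗ f) ∘ (((idm a ⊠ idm b) ⊠ lshuf c d e f)
      ∘ (asc (a ⊗ b) (c ⊗ d) (e ⊗ f) ∘ k)).
Proof.
  have := @shuf_assoc _ _ _ Br a b c d e f; rewrite !lshufE => assoc_eq.
  by rewrite !tensm_id !comp_assoc assoc_eq.
Qed.

Lemma lshuf_lui_k A B F (k : hom F _) :
  lshuf munit munit A B ∘ ((lui munit ⊠ (idm A ⊠ idm B)) ∘ (lui (A ⊗ B) ∘ k))
  = (lui A ⊠ lui B) ∘ k.
Proof.
  have := @shuf_lui _ _ _ Br A B; rewrite lshufE => lui_eq.
  by rewrite tensm_id !comp_assoc lui_eq.
Qed.

Lemma lshuf_rui_k A B F (k : hom F _) :
  lshuf A B munit munit ∘ (((idm A ⊠ idm B) ⊠ lui munit) ∘ (rui (A ⊗ B) ∘ k))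
  = (rui A ⊠ rui B) ∘ k.
Proof.
  have := @shuf_rui _ _ _ Br A B; rewrite lshufE => rui_eq.
  by rewrite tensm_id !comp_assoc rui_eq.
Qed.

Lemma tensor_algebra A B (mA : hom (A ⊗ A) A) (uA : hom munit A)
    (mB : hom (B ⊗ B) B) (uB : hom munit B) :
  is_algebra mA uA -> is_algebra mB uB -> is_algebra (tmul mA mB) (tunit uA uB).
Proof.
  move=> [assocA [unitlA unitrA]] [assocB [unitlB unitrB]].
  rewrite /is_algebra /tmul /tunit !lshufE; split; [|split]; apply: tail_id; rassoc.
  - rewrite (tensm_comp_idr _ _ (mA ⊠ mB)) (tensm_comp_idl _ _ (mA ⊠ mB)) -(tensm_id A B).
    rassoc; rewrite !lshuf_nat_k tensm_comp_k assocA assocB !tensm_comp; rassoc.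
    by rewrite lshuf_assoc_k.
  - rewrite (tensm_comp_idr _ _ (uA ⊠ uB)) -(tensm_id A B); rassoc.
    by rewrite lshuf_nat_k lshuf_lui_k !tensm_comp_k unitlA unitlB.
  - rewrite (tensm_comp_idl _ _ (uA ⊠ uB)) -(tensm_id A B); rassoc.
    by rewrite lshuf_nat_k lshuf_rui_k !tensm_comp_k unitrA unitrB.
Qed.

End TensorAlgebra.

Section Epimorphisms.
Context {Ob : Type} {C : Category Ob} {M : @Monoidal Ob C}.

Lemma epi_comp A B D (f : hom B D) (g : hom A B) : epi f -> epi g -> epi (f ∘ g).
Proof. by move=> ef eg E x y e; apply: ef; apply: eg; rewrite -!comp_assoc. Qed.

Lemma epi_pushout_self A B (e : hom A B) : epi e -> is_pushout e e (idm B) (idm B).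
Proof.
  move=> ee; split=> // Q b d bd; exists b; split.
  - by rewrite comp_id_r; split=> //; apply: ee.
  - by move=> h' [h'b _]; rewrite comp_id_r in h'b.
Qed.

Lemma epi_of_trivial_pushout A B (e : hom A B) :
  is_pushout e e (idm B) (idm B) -> epi e.
Proof.
  move=> [_ po] D g h ge; have [k [[kg kh] _]] := po D g h ge.
  by rewrite comp_id_r in kg kh; rewrite -kg -kh.
Qed.

Hypothesis tens_po : tensor_preserves_pushouts.

(* Epimorphisms are the maps with trivial cokernel pair, and tensoring
   preserves that pushout. *)
Lemma epi_tensm A B A' B' (f : hom A B) (g : hom A' B') : epi f -> epi g -> epi (f ⊠ g).
Proof.
  move=> ef eg; rewrite tensm_split_l.
  apply: epi_comp; apply: epi_of_trivial_pushout; rewrite -tensm_id.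
  - exact: (proj1 (tens_po _ (epi_pushout_self ef))).
  - exact: (proj2 (tens_po _ (epi_pushout_self eg))).
Qed.

Lemma is_algebra_epi_image A P (p : hom A P) mA uA mP uP :
  epi p -> is_alg_morph mA uA mP uP p -> is_algebra mA uA -> is_algebra mP uP.
Proof.
  move=> ep [p_mul p_unit] [assocA [unitlA unitrA]].
  have p_mul_k E (k : hom E _) : mP ∘ ((p ⊠ p) ∘ k) = p ∘ (mA ∘ k).
    by rewrite !comp_assoc p_mul.
  split; [|split]; [apply: (epi_tensm (epi_tensm ep ep) ep) | apply: ep | apply: ep];
    apply: tail_id; rassoc.
  - rewrite tensm_comp_k (comp_id_l p) -p_mul tensm_comp_split_l; rassoc; rewrite p_mul_k.
    rewrite asc_nat_k tensm_comp_k (comp_id_l p) -p_mul tensm_comp_split_r; rassoc.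
    by rewrite p_mul_k !comp_assoc -(comp_assoc p mA) assocA !comp_assoc.
  - rewrite lui_nat_k tensm_comp_k (comp_id_r uP) (comp_id_l p) -p_unit.
    rewrite tensm_comp_split_l; rassoc; rewrite p_mul_k.
    by rewrite !comp_assoc -(comp_assoc p mA) -(comp_assoc p) unitlA comp_id_r comp_id_l.
  - rewrite rui_nat_k tensm_comp_k (comp_id_r uP) (comp_id_l p) -p_unit.
    rewrite tensm_comp_split_r; rassoc; rewrite p_mul_k.
    by rewrite !comp_assoc -(comp_assoc p mA) -(comp_assoc p) unitrA comp_id_r comp_id_l.
Qed.

End Epimorphisms.

Section BulletAlgebra.
Context {Ob : Type} {C : Category Ob} {M : @Monoidal Ob C} {Br : @Braided Ob C M}
        {PO : @HasPushouts Ob C}.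
Context {H : Ob} (HH : HopfAlg H).

Lemma hopf_is_algebra : is_algebra (hmul HH) (hunit HH).
Proof.
  split; first exact: h_assoc.
  by rewrite h_unitl h_unitr lu_iso2 ru_iso2.
Qed.

Context {A AH : Ob} (piA : hom (A ⊗ H) AH).

Definition bullet_mul (mH : hom (tens_bullet HH piA piA) AH) : hom (AH ⊗ AH) AH :=
  mH ∘ tens_mubar HH piA piA.

(* The pushout square [mubar (pi ⊗ pi) = pi_{A⊗A} mu_{A,A}] turns [m • H] being a
   morphism into multiplicativity of [pi]. *)
Lemma pi_alg_morph (rhoA : hom A AH) (m : hom (A ⊗ A) A) mH (u : hom munit A) uH :
  mH ∘ tens_pi HH piA piA = piA ∘ (m ⊠ idm H) ->
  uH ∘ lu H = piA ∘ (u ⊠ idm H) -> uH ∘ hunit HH = rhoA ∘ u ->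
  is_alg_morph (tmul m (hmul HH)) (tunit u (hunit HH)) (bullet_mul mH) (rhoA ∘ u) piA.
Proof.
  move=> mH_pi uH_pi uH_rho; split.
  - have [square _] := po_spec (piA ⊠ piA) (mu_XY HH A A).
    rewrite /bullet_mul -comp_assoc square (comp_assoc mH) mH_pi /mu_XY /tmul.
    by rewrite -comp_assoc (comp_assoc (m ⊠ idm H)) -tensm_comp comp_id_l comp_id_r.
  - rewrite /tunit (tensm_split_l u) -uH_rho; apply: tail_id; rassoc.
    by rewrite (comp_assoc piA) -uH_pi; rassoc; rewrite lu_nat_k lu_lui_k.
Qed.

End BulletAlgebra.

Theorem mainTheorem14 (Ob : Type) (C : Category Ob) (M : @Monoidal Ob C)
    (Br : @Braided Ob C M) (Cl : @Closed Ob C M) (PO : @HasPushouts Ob C)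
    (Hpres : tensor_preserves_pushouts) (Hreg : all_epis_regular)
    (H : Ob) (HH : HopfAlg H)
    (A AH : Ob) (piA : hom (A ⊗ H) AH) (rhoA : hom A AH)
    (m : hom (A ⊗ A) A) (mH : hom (tens_bullet HH piA piA) AH)
    (u : hom munit A) (uH : hom H AH)
    (Halg : qPMod_algebra HH piA rhoA m mH u uH) :
  is_algebra m u /\
  exists (mAH : hom (AH ⊗ AH) AH) (uAH : hom munit AH),
    is_algebra mAH uAH /\
    is_alg_morph (tmul m (hmul HH)) (tunit u (hunit HH)) mAH uAH piA /\
    is_alg_morph m u mAH uAH rhoA.
Proof.
  case: Halg => [[piA_epi _] [mH_pi [mH_rho [uH_pi [uH_rho [m_assoc [m_unitr m_unitl]]]]]]].
  have A_alg : is_algebra m u by [].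
  have piA_morph := pi_alg_morph mH_pi uH_pi uH_rho.
  split=> //; exists (bullet_mul mH), (rhoA ∘ u); split; [|split] => //.
  - apply: (is_algebra_epi_image Hpres piA_epi piA_morph).
    exact: tensor_algebra A_alg (hopf_is_algebra HH).
  - by split=> //; rewrite /bullet_mul -comp_assoc -mH_rho.
Qed.
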